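(* Let $q$ be a primitive $2d$-th root of unity with $d\ge2$ (and $q\neq\pm1,\pm i$). Then the subalgebra $H_{\{1\}}^{Inv}$ of invariant elements of $H_{\{1\}}$ is spanned (equivalently, generated as an algebra) by the monomials $x_1^{kd}y_1^{k'd}$ with $k,k'\in\mathbb N_0$ and $4\mid(k-k')$.
   Context: Fix a square root $q^{1/2}$ of $q$. $H_{\{1\}}$ is the unital $\mathbb C$-algebra generated by $x_1,y_1$ with relation $x_1y_1=qy_1x_1$. $U_q(gl(2,\mathbb R))$, generated by $E,F,K^{\pm1},L^{\pm1}$, acts on it by $L1=K1=1$, $E1=F1=0$, $Lx_1=q^{1/2}x_1$, $Ly_1=q^{1/2}y_1$, $Kx_1=q^{-1/2}x_1$, $Ky_1=q^{1/2}y_1$, $Ex_1=q^{1/2}y_1$, $Ey_1=0$, $Fx_1=0$, $Fy_1=q^{-1/2}x_1$, extended by $K(ab)=K(a)K(b)$, $L(ab)=L(a)L(b)$, $E(ab)=E(a)K(b)+K^{-1}(a)E(b)$, $F(ab)=F(a)K(b)+K^{-1}(a)F(b)$. An element $a$ is an invariant element of degree $r$ if $Ea=Fa=0$, $Ka=a$, $La=q^{r/2}a$; $H_{\{1\}}^{Inv}$ is the subalgebra spanned by all invariant elements. *)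

From HB Require Import structures.
From mathcomp Require Import all_boot all_order all_algebra.
Set Implicit Arguments. Unset Strict Implicit. Unset Printing Implicit Defensive.
Import Order.TTheory GRing.Theory Num.Theory.
Local Open Scope ring_scope.

(* Concrete model of the quantum plane H_{1} = C<x1,y1>/(x1 y1 = q y1 x1).
   An element p : {poly {poly C}} represents
        sum_{a,b} ((p`_a)`_b) x1^a y1^b   (PBW basis x1^a y1^b).
   Using y1^b x1^c = q^{-bc} x1^c y1^b, the product is
     (x1^a y1^b)(x1^c y1^e) = q^{-bc} x1^{a+c} y1^{b+e}. *)
Section QuantumPlane.
Variable C : numClosedFieldType.
Variable q : C.

Definition qtw (c : nat) (P : {poly C}) : {poly C} :=
  \poly_(i < size P) (q ^- (i * c) * P`_i).

Definition qmul (p r : {poly {poly C}}) : {poly {poly C}} :=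
  \sum_(a < size p) \sum_(c < size r)
     ((qtw c p`_a * r`_c)%:P * 'X^(a + c)).

Definition qone : {poly {poly C}} := 1.
Definition qx1 : {poly {poly C}} := 'X.
Definition qy1 : {poly {poly C}} := ('X)%:P.

Definition qexp (p : {poly {poly C}}) (n : nat) : {poly {poly C}} :=
  iter n (qmul p) qone.

End QuantumPlane.

Definition qsc (C : numClosedFieldType) (c : C) (u : {poly {poly C}}) : {poly {poly C}} :=
  c%:P *: u.

Definition is_linear_op (C : numClosedFieldType) (T : {poly {poly C}} -> {poly {poly C}}) :=
  forall (c : C) (u v : {poly {poly C}}), T (qsc c u + v) = qsc c (T u) + T v.

(* E, F, K, Kinv (= K^{-1}), L : the operators by which U_q(gl(2,R))
   acts on H_{1}, with sq a fixed square root q^{1/2} of q. *)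
Definition is_Uq_action (C : numClosedFieldType) (q sq : C)
  (E F K Kinv L : {poly {poly C}} -> {poly {poly C}}) : Prop :=
  [/\ [/\ is_linear_op E, is_linear_op F, is_linear_op K,
          is_linear_op Kinv & is_linear_op L],
      (forall a, K (Kinv a) = a) /\ (forall a, Kinv (K a) = a),
      [/\ L (qone C) = qone C, K (qone C) = qone C,
          E (qone C) = 0 & F (qone C) = 0],
      [/\ L (qx1 C) = qsc sq (qx1 C), L (qy1 C) = qsc sq (qy1 C),
          K (qx1 C) = qsc sq^-1 (qx1 C) & K (qy1 C) = qsc sq (qy1 C)] /\
      [/\ E (qx1 C) = qsc sq (qy1 C), E (qy1 C) = 0,
          F (qx1 C) = 0 & F (qy1 C) = qsc sq^-1 (qx1 C)] &
      [/\ forall a b, K (qmul q a b) = qmul q (K a) (K b),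
          forall a b, L (qmul q a b) = qmul q (L a) (L b),
          forall a b, E (qmul q a b) = qmul q (E a) (K b) + qmul q (Kinv a) (E b) &
          forall a b, F (qmul q a b) = qmul q (F a) (K b) + qmul q (Kinv a) (F b)]].

Definition invariant_of_degree (C : numClosedFieldType) (sq : C)
  (E F K L : {poly {poly C}} -> {poly {poly C}}) (r : nat) (a : {poly {poly C}}) :=
  [/\ E a = 0, F a = 0, K a = a & L a = qsc (sq ^+ r) a].

Definition in_span (C : numClosedFieldType) (S : {poly {poly C}} -> Prop)
  (v : {poly {poly C}}) : Prop :=
  exists (n : nat) (c : 'I_n -> C) (s : 'I_n -> {poly {poly C}}),
    (forall i, S (s i)) /\ v = \sum_(i < n) qsc (c i) (s i).

From HB Require Import structures.
From mathcomp Require Import all_boot all_order all_algebra.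
From mathcomp Require Import ring zify.
Import Order.TTheory GRing.Theory Num.Theory.
Set Implicit Arguments. Unset Strict Implicit. Unset Printing Implicit Defensive.
Local Open Scope ring_scope.

(* In the PBW basis x1^i y1^j every generator acts by a monomial map: K and L
   scale x1^i y1^j by sq^(j-i) and sq^(i+j), while E (resp. F) sends it to a
   multiple of x1^(i-1) y1^(j+1) (resp. x1^(i+1) y1^(j-1)) whose coefficient
   vanishes iff the quantum integer [i] (resp. [j]) in q^-2 does, i.e. iff d
   divides i (resp. j).  So an invariant element is a combination of monomials
   x1^(kd) y1^(k'd) with sq^(kd) = sq^(k'd); as sq^d is a primitive fourth root
   of unity this means 4 | k - k', and every such monomial is invariant. *)

Section Monomials.
Variable C : numClosedFieldType.
Implicit Types (c e : C) (u v a : {poly {poly C}}).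

Definition mono (i j : nat) : {poly {poly C}} := ('X^j)%:P * 'X^i.
Definition smono c (i j : nat) : {poly {poly C}} := qsc c (mono i j).

Lemma qscE c u : qsc c u = (c%:P)%:P * u.
Proof. by rewrite /qsc -mul_polyC. Qed.

Lemma qsc1 u : qsc 1 u = u.
Proof. by rewrite /qsc scale1r. Qed.

Lemma qscr0 c : qsc c 0 = 0.
Proof. by rewrite /qsc scaler0. Qed.

Lemma qscA c e u : qsc c (qsc e u) = qsc (c * e) u.
Proof. by rewrite /qsc scalerA -polyCM. Qed.

Lemma smono0 i j : smono 0 i j = 0.
Proof. by rewrite /smono /qsc scale0r. Qed.

Lemma smono1 i j : smono 1 i j = mono i j.
Proof. exact: qsc1. Qed.

Lemma qsc_smono c e i j : qsc c (smono e i j) = smono (c * e) i j.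
Proof. exact: qscA. Qed.

Lemma smonoD c e i j : smono c i j + smono e i j = smono (c + e) i j.
Proof. by rewrite /smono /qsc -scalerDl -polyCD. Qed.

Lemma coef_smono c i j m : (smono c i j)`_m = if m == i then c *: 'X^j else 0.
Proof.
rewrite /smono qscE /mono !coefCM coefXn.
by case: eqP; rewrite ?mulr1 ?mulr0 // mul_polyC.
Qed.

Lemma coef2_smono c i j m n :
  (smono c i j)`_m`_n = if (m == i) && (n == j) then c else 0.
Proof.
rewrite coef_smono; case: eqP => _ /=; last by rewrite coef0.
by rewrite coefZ coefXn; case: eqP; rewrite ?mulr1 ?mulr0.
Qed.

Lemma size_smono c i j : c != 0 -> size (smono c i j) = i.+1.
Proof.
move=> c0; rewrite /smono qscE /mono mulrA -polyCM size_Cmul ?size_polyXn //.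
by rewrite mul_polyC scaler_eq0 negb_or c0 /= -size_poly_eq0 size_polyXn.
Qed.

Lemma monomial_decomposition a :
  a = \sum_(i < size a) \sum_(j < size a`_i) smono a`_i`_j i j.
Proof.
rewrite -{1}[a]coefK poly_def; apply: eq_bigr => i _.
rewrite -{1}[a`_i]coefK poly_def -mul_polyC rmorph_sum big_distrl /=.
apply: eq_bigr => j _.
by rewrite /smono qscE /mono -mul_polyC polyCM mulrA.
Qed.

Lemma monomial_ind (P : {poly {poly C}} -> Prop) :
  P 0 -> (forall u v, P u -> P v -> P (u + v)) ->
  (forall c i j, P (smono c i j)) -> forall a, P a.
Proof.
move=> P0 PD Pm a; rewrite (monomial_decomposition a).
by apply: big_ind => // i _; apply: big_ind.
Qed.

Variable q : C.

Lemma qmul0p u : qmul q 0 u = 0.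
Proof. by rewrite /qmul size_poly0 big_ord0. Qed.

Lemma qmulp0 u : qmul q u 0 = 0.
Proof. by rewrite /qmul big1 // => i _; rewrite size_poly0 big_ord0. Qed.

Lemma coef_qtw k P n : (qtw q k P)`_n = q ^- (n * k) * P`_n.
Proof. by rewrite coef_poly; case: ltnP => // ?; rewrite nth_default ?mulr0. Qed.

Lemma qtw_scaleXn c k j :
  qtw q k (c *: 'X^j) = (c * q ^- (j * k)) *: 'X^j.
Proof.
apply/polyP => n; rewrite coef_qtw !coefZ coefXn.
by case: eqP => [->|_]; rewrite ?mulr0 // !mulr1 mulrC.
Qed.

Lemma qmul_smono c e i j k l :
  qmul q (smono c i j) (smono e k l) =
  smono (c * e * q ^- (j * k)) (i + k) (j + l).
Proof.
have [->|c0] := eqVneq c 0; first by rewrite smono0 qmul0p !mul0r smono0.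
have [->|e0] := eqVneq e 0; first by rewrite smono0 qmulp0 mulr0 mul0r smono0.
rewrite /qmul size_smono // big_ord_recr /= big1 ?add0r; last first.
  move=> a _; rewrite big1 // => b _; rewrite coef_smono (ltn_eqF (ltn_ord a)).
  by rewrite /qtw size_poly0 poly_def big_ord0 mul0r polyC0 mul0r.
rewrite size_smono // big_ord_recr /= big1 ?add0r; last first.
  by move=> b _; rewrite (coef_smono e) (ltn_eqF (ltn_ord b)) mulr0 polyC0 mul0r.
rewrite !coef_smono !eqxx qtw_scaleXn -scalerAl -scalerAr scalerA -exprD.
by rewrite /smono qscE /mono mulrA -polyCM [_%:P * 'X^(j + l)]mul_polyC mulrAC.
Qed.

Lemma qmul_mono i j k l :
  qmul q (mono i j) (mono k l) = smono (q ^- (j * k)) (i + k) (j + l).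
Proof. by rewrite -!smono1 qmul_smono !mul1r. Qed.

Lemma qone_mono : qone C = mono 0 0.
Proof. by rewrite /qone /mono !expr0 mulr1. Qed.

Lemma qx1_mono : qx1 C = mono 1 0.
Proof. by rewrite /qx1 /mono expr0 expr1 mul1r. Qed.

Lemma qy1_mono : qy1 C = mono 0 1.
Proof. by rewrite /qy1 /mono expr0 expr1 mulr1. Qed.

Lemma mono_xS n : mono n.+1 0 = qmul q (qx1 C) (mono n 0).
Proof. by rewrite qx1_mono qmul_mono mul0n expr0 invr1 smono1. Qed.

Lemma mono_yS n : mono 0 n.+1 = qmul q (qy1 C) (mono 0 n).
Proof. by rewrite qy1_mono qmul_mono muln0 expr0 invr1 smono1. Qed.

Lemma mono_xy i j : mono i j = qmul q (mono i 0) (mono 0 j).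
Proof. by rewrite qmul_mono mul0n expr0 invr1 smono1 addn0. Qed.

Lemma qexp_x1 n : qexp q (qx1 C) n = mono n 0.
Proof.
elim: n => [|n IHn]; first exact: qone_mono.
by rewrite /qexp iterS -/(qexp q _ n) IHn mono_xS.
Qed.

Lemma qexp_y1 n : qexp q (qy1 C) n = mono 0 n.
Proof.
elim: n => [|n IHn]; first exact: qone_mono.
by rewrite /qexp iterS -/(qexp q _ n) IHn mono_yS.
Qed.

End Monomials.

Section LinearOperators.
Variables (C : numClosedFieldType) (T : {poly {poly C}} -> {poly {poly C}}).
Hypothesis linT : is_linear_op T.

Lemma linear_op0 : T 0 = 0.
Proof.
have := linT 1 0 0; rewrite qscr0 addr0 qsc1.
by move/(congr1 (fun x => x - T 0)); rewrite addrK subrr.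
Qed.

Lemma linear_opD u v : T (u + v) = T u + T v.
Proof. by have := linT 1 u v; rewrite !qsc1. Qed.

Lemma linear_opZ c u : T (qsc c u) = qsc c (T u).
Proof. by have := linT c u 0; rewrite !addr0 linear_op0 addr0. Qed.

Lemma linear_op_coef (t : nat -> nat -> C) (f g : nat -> nat) i j :
  (forall i' j', T (mono C i' j') = smono (t i' j') (f i') (g j')) ->
  (forall i' j', t i' j' != 0 -> f i' = f i -> g j' = g j -> i' = i /\ j' = j) ->
  forall a, (T a)`_(f i)`_(g j) = t i j * a`_i`_j.
Proof.
move=> Tmono Tinj; apply: monomial_ind => [|u v Hu Hv|c i' j'].
- by rewrite linear_op0 !coef0 mulr0.
- by rewrite linear_opD !coefD Hu Hv mulrDr.
rewrite linear_opZ Tmono qsc_smono !coef2_smono.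
have [/andP[/eqP<- /eqP<-]|ne] := boolP ((i == i') && (j == j')).
  by rewrite !eqxx mulrC.
rewrite mulr0.
have [->|t0] := eqVneq (t i' j') 0; first by rewrite mulr0; case: ifP.
case: ifP => // /andP[/eqP fi /eqP gj].
by have [ii jj] := Tinj i' j' t0 (esym fi) (esym gj); rewrite ii jj !eqxx in ne.
Qed.

End LinearOperators.

Section Span.
Variables (C : numClosedFieldType) (S : {poly {poly C}} -> Prop).

Lemma span0 : in_span S 0.
Proof. by exists 0%N, (fun _ => 0), (fun _ => 0); split => [[]|]; rewrite ?big_ord0. Qed.

Lemma span_mem u : S u -> in_span S u.
Proof.
by move=> Su; exists 1%N, (fun _ => 1), (fun _ => u); rewrite big_ord1 qsc1.
Qed.

Lemma spanZ c u : in_span S u -> in_span S (qsc c u).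
Proof.
move=> [n [c' [s [Ss ->]]]]; exists n, (fun i => c * c' i), s; split => //.
by rewrite /qsc scaler_sumr; apply: eq_bigr => i _; rewrite -/(qsc _ _) qscA.
Qed.

Lemma spanD u v : in_span S u -> in_span S v -> in_span S (u + v).
Proof.
move=> [n [cu [su [Su ->]]]] [m [cv [sv [Sv ->]]]].
exists (n + m)%N, (fun i => match split i with inl a => cu a | inr b => cv b end).
exists (fun i => match split i with inl a => su a | inr b => sv b end).
split; first by move=> i; case: (split i).
rewrite big_split_ord /=; congr (_ + _); apply: eq_bigr => i _.
  by rewrite (unsplitK (inl _ : 'I_n + 'I_m)).
by rewrite (unsplitK (inr _ : 'I_n + 'I_m)).
Qed.

End Span.

Lemma span_sub (C : numClosedFieldType) (S T : {poly {poly C}} -> Prop) v :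
  (forall u, S u -> in_span T u) -> in_span S v -> in_span T v.
Proof.
move=> ST [n [c [s [Ss ->]]]].
apply: (big_ind (in_span T)); [exact: span0 | exact: spanD |].
by move=> i _; apply/spanZ/ST.
Qed.

Section MultiplicativeOperators.
Variables (C : numClosedFieldType) (q c e : C) (T : {poly {poly C}} -> {poly {poly C}}).
Hypotheses (T1 : T (qone C) = qone C) (Tx : T (qx1 C) = qsc c (qx1 C))
  (Ty : T (qy1 C) = qsc e (qy1 C)) (TM : {morph T : a b / qmul q a b}).

Lemma multiplicative_op_mono i j : T (mono C i j) = smono (c ^+ i * e ^+ j) i j.
Proof.
have Tx_pow n : T (mono C n 0) = smono (c ^+ n) n 0.
  elim: n => [|n IHn]; first by rewrite -qone_mono T1 qone_mono smono1.
  rewrite (mono_xS q) TM IHn Tx qx1_mono qmul_smono.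
  by rewrite mul0n expr0 invr1 mulr1 -exprS.
have Ty_pow n : T (mono C 0 n) = smono (e ^+ n) 0 n.
  elim: n => [|n IHn]; first by rewrite -qone_mono T1 qone_mono smono1.
  rewrite (mono_yS q) TM IHn Ty qy1_mono qmul_smono.
  by rewrite muln0 expr0 invr1 mulr1 -exprS.
by rewrite (mono_xy q) TM Tx_pow Ty_pow qmul_smono mul0n expr0 invr1 mulr1 addn0.
Qed.

End MultiplicativeOperators.

(* sq^n times the quantum integer [n] in the variable q^-2 = sq^-4. *)
Definition ecoef (C : numClosedFieldType) (sq : C) (n : nat) : C :=
  sq ^+ n * \sum_(k < n) (sq ^- 4) ^+ k.

Lemma ecoefSr (C : numClosedFieldType) (sq : C) n : sq != 0 ->
  ecoef sq n.+1 = sq * sq ^- n / (sq ^+ 2) ^+ n + sq * ecoef sq n.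
Proof.
move=> sq0; rewrite /ecoef big_ord_recr /= exprS.
set a := sq ^+ n; have a0 : a != 0 by rewrite expf_neq0.
have -> : (sq ^- 4) ^+ n = a ^- 4 by rewrite exprVn -!exprM mulnC.
have -> : (sq ^+ 2) ^+ n = a ^+ 2 by rewrite -!exprM mulnC.
set S := \sum_(i < n) _.
by field.
Qed.

Lemma ecoefSl (C : numClosedFieldType) (sq : C) n : sq != 0 ->
  ecoef sq n.+1 = sq ^+ n.+1 + sq ^- 3 * ecoef sq n.
Proof.
move=> sq0; rewrite /ecoef big_ord_recl expr0.
under eq_bigr => i _ do rewrite lift0 exprS.
rewrite -big_distrr /= exprS.
set a := sq ^+ n; have a0 : a != 0 by rewrite expf_neq0.
set S := \sum_(i < n) _.
by field.
Qed.

Section UqAction.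
Variables (C : numClosedFieldType) (sq : C).
Variables (E F K Kinv L : {poly {poly C}} -> {poly {poly C}}).
Hypotheses (HU : is_Uq_action (sq ^+ 2) sq E F K Kinv L) (sq0 : sq != 0).
Local Notation q := (sq ^+ 2).

Lemma K_mono i j : K (mono C i j) = smono (sq ^- i * sq ^+ j) i j.
Proof.
case: HU => _ _ [_ K1 _ _] [[_ _ Kx Ky] _] [KM _ _ _].
by rewrite (multiplicative_op_mono K1 Kx Ky KM) exprVn.
Qed.

Lemma L_mono i j : L (mono C i j) = smono (sq ^+ (i + j)) i j.
Proof.
case: HU => _ _ [L1 _ _ _] [[Lx Ly _ _] _] [_ LM _ _].
by rewrite (multiplicative_op_mono L1 Lx Ly LM) exprD.
Qed.

Lemma Kinv_mono i j : Kinv (mono C i j) = smono (sq ^+ i * sq ^- j) i j.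
Proof.
case: HU => [[_ _ linK _ _] [_ KinvK] _ _ _].
suff -> : mono C i j = K (smono (sq ^+ i * sq ^- j) i j) by rewrite KinvK.
rewrite /smono linear_opZ // K_mono qsc_smono mulrACA.
by rewrite mulfV ?expf_neq0 // mulVf ?expf_neq0 // mulr1 smono1.
Qed.

Lemma twisted_derivation_qexp D u :
  D (qone C) = 0 -> D u = 0 ->
  (forall a b, D (qmul q a b) = qmul q (D a) (K b) + qmul q (Kinv a) (D b)) ->
  forall n, D (qexp q u n) = 0.
Proof.
move=> D1 Du DM; elim=> // n IHn.
by rewrite /qexp iterS -/(qexp q u n) DM Du IHn qmul0p qmulp0 addr0.
Qed.

Lemma E_x_pow n : E (mono C n.+1 0) = smono (ecoef sq n.+1) n 1.
Proof.
case: HU => _ _ _ [_ [Ex _ _ _]] [_ _ EM _].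
elim: n => [|n IHn].
  by rewrite -qx1_mono Ex qy1_mono /ecoef big_ord1 expr1 expr0 mulr1.
rewrite (mono_xS q) EM IHn Ex qx1_mono qy1_mono K_mono Kinv_mono -/(smono sq 0 1).
rewrite !qmul_smono smonoD mul1n mul0n !expr0 !invr1 !mulr1 expr1.
by rewrite [ecoef sq n.+2](ecoefSr _ sq0) mulrA.
Qed.

Lemma F_y_pow n : F (mono C 0 n.+1) = smono (sq ^- 2 * ecoef sq n.+1) 1 n.
Proof.
case: HU => _ _ _ [_ [_ _ _ Fy]] [_ _ _ FM].
elim: n => [|n IHn].
  by rewrite -qy1_mono Fy qx1_mono /ecoef big_ord1 expr1 expr0 mulr1 expr2 invfM divfK.
rewrite (mono_yS q) FM IHn Fy qx1_mono qy1_mono K_mono Kinv_mono -/(smono sq^-1 1 0).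
rewrite !qmul_smono smonoD [ecoef sq n.+2](ecoefSl _ sq0); congr smono.
rewrite !expr0 !invr1 !mul1r !mulr1 mul1n !exprSr.
by field.
Qed.

Lemma E_mono i j : E (mono C i j) = smono (ecoef sq i * sq ^+ j) i.-1 j.+1.
Proof.
case: HU => _ _ [_ _ E1 _] [_ [_ Ey _ _]] [_ _ EM _].
have Ey_pow : E (mono C 0 j) = 0.
  by rewrite -(qexp_y1 q); apply: twisted_derivation_qexp.
rewrite (mono_xy q) EM Ey_pow qmulp0 addr0 K_mono.
case: i => [|i]; first by rewrite -qone_mono E1 qmul0p /ecoef big_ord0 mulr0 !mul0r smono0.
by rewrite E_x_pow qmul_smono muln0 !expr0 !invr1 mul1r mulr1 addn0.
Qed.

Lemma F_mono i j :
  F (mono C i j) = smono (sq ^+ i * (sq ^- 2 * ecoef sq j)) i.+1 j.-1.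
Proof.
case: HU => _ _ [_ _ _ F1] [_ [_ _ Fx _]] [_ _ _ FM].
have Fx_pow : F (mono C i 0) = 0.
  by rewrite -(qexp_x1 q); apply: twisted_derivation_qexp.
rewrite (mono_xy q) FM Fx_pow qmul0p add0r Kinv_mono.
case: j => [|j]; first by rewrite -qone_mono F1 qmulp0 /ecoef big_ord0 !mulr0 smono0.
by rewrite F_y_pow qmul_smono mul0n !expr0 !invr1 !mulr1 addn1.
Qed.

End UqAction.

Lemma sum_expr_eq0 (R : idomainType) (x : R) n :
  x != 1 -> (\sum_(k < n) x ^+ k == 0) = (x ^+ n == 1).
Proof. by move=> x1; rewrite -[RHS]subr_eq0 subrX1 mulf_eq0 subr_eq0 (negPf x1). Qed.

Lemma prim_root_half_order (R : idomainType) n (z : R) :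
  (2 * n).-primitive_root z -> z ^+ n = -1.
Proof.
move=> pz; have n_gt0 : (0 < n)%N by have := prim_order_gt0 pz; lia.
have /eqP : (z ^+ n) ^+ 2 = 1 by rewrite -exprM mulnC prim_expr_order.
rewrite sqrf_eq1 -(prim_order_dvd pz) => /orP[/(dvdn_leq n_gt0)|/eqP//].
lia.
Qed.

Lemma prim_root4 (R : numDomainType) (w : R) : w ^+ 2 = -1 -> 4.-primitive_root w.
Proof.
move=> w2; have w4 : w ^+ (2 * 2) = 1 by rewrite exprM w2 sqrrN expr1n.
have [m pm m_dvd4] := prim_order_exists (isT : 0 < 2 * 2)%N w4.
have m_ndvd2 : ~~ (m %| 2)%N.
  by rewrite (prim_order_dvd pm) w2 lt_eqF // (lt_trans (ltrN10 R) ltr01).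
have := dvdn_leq (isT : 0 < 2 * 2)%N m_dvd4; move: pm m_dvd4 m_ndvd2.
by case: m => [|[|[|[|[|m]]]]].
Qed.

Section RootsOfUnity.
Variables (C : numClosedFieldType) (d : nat) (sq : C).
Hypotheses (d_ge2 : (1 < d)%N) (prim_q : (2 * d).-primitive_root (sq ^+ 2)).

Lemma sq_neq0 : sq != 0.
Proof.
have := prim_root_eq0 prim_q; rewrite expf_eq0 /= muln_eq0 /=.
by case: (sq == 0) => //; case: d d_ge2.
Qed.

Lemma ecoef_eq0 n : (ecoef sq n == 0) = (d %| n)%N.
Proof.
have sq4_exp m : ((sq ^+ 4) ^+ m == 1) = (d %| m)%N.
  have -> : (sq ^+ 4) ^+ m = (sq ^+ 2) ^+ (2 * m) by rewrite -!exprM mulnA.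
  by rewrite -(prim_order_dvd prim_q) dvdn_pmul2l.
rewrite /ecoef mulf_eq0 expf_eq0 (negPf sq_neq0) andbF /= sum_expr_eq0.
  by rewrite exprVn invr_eq1 sq4_exp.
by rewrite invr_eq1 -[sq ^+ 4]expr1 sq4_exp dvdn1 gtn_eqF.
Qed.

Lemma prim_root4_expd : 4.-primitive_root (sq ^+ d).
Proof. by apply: prim_root4; rewrite -exprM mulnC exprM (prim_root_half_order prim_q). Qed.

Lemma expr_muld_eq k k' :
  (sq ^+ (k * d) == sq ^+ (k' * d)) = (4 %| k%:Z - k'%:Z)%Z.
Proof.
rewrite !(mulnC _ d) !exprM (eq_prim_root_expr prim_root4_expd).
by rewrite -eqz_mod_dvd natz !modz_nat eqz_nat.
Qed.

End RootsOfUnity.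

Definition invariant_monomial (C : numClosedFieldType) (q : C) (d : nat)
    (m : {poly {poly C}}) : Prop :=
  exists k k' : nat, (4 %| (k%:Z - k'%:Z))%Z /\
    m = qmul q (qexp q (qx1 C) (k * d)) (qexp q (qy1 C) (k' * d)).

Section Invariants.
Variables (C : numClosedFieldType) (d : nat) (sq : C).
Variables (E F K Kinv L : {poly {poly C}} -> {poly {poly C}}).
Hypotheses (d_ge2 : (1 < d)%N) (prim_q : (2 * d).-primitive_root (sq ^+ 2)).
Hypothesis HU : is_Uq_action (sq ^+ 2) sq E F K Kinv L.
Let sq0 := sq_neq0 d_ge2 prim_q.

Lemma invariant_support r a i j :
  invariant_of_degree sq E F K L r a -> a`_i`_j != 0 ->
  [/\ (d %| i)%N, (d %| j)%N & sq ^+ i = sq ^+ j].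
Proof.
case=> Ea Fa Ka _ aij; case: HU => [[linE linF linK _ _] _ _ _ _]; split.
- case: i aij => [|i] aij; first exact: dvdn0.
  have Einj i' j' : ecoef sq i' * sq ^+ j' != 0 ->
      i'.-1 = i.+1.-1 -> j'.+1 = j.+1 -> i' = i.+1 /\ j' = j.
    by case: i' => [|i'] /=; [rewrite /ecoef big_ord0 mulr0 mul0r eqxx | move=> _ -> [->]].
  have := linear_op_coef linE (E_mono HU sq0) Einj a.
  rewrite Ea !coef0 => /esym/eqP; rewrite mulf_eq0 (negPf aij) orbF mulf_eq0.
  by rewrite (ecoef_eq0 d_ge2 prim_q) expf_eq0 (negPf sq0) andbF orbF.
- case: j aij => [|j] aij; first exact: dvdn0.
  have Finj i' j' : sq ^+ i' * (sq ^- 2 * ecoef sq j') != 0 ->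
      i'.+1 = i.+1 -> j'.-1 = j.+1.-1 -> i' = i /\ j' = j.+1.
    by case: j' => [|j'] /=; [rewrite /ecoef big_ord0 !mulr0 eqxx | move=> _ [->] ->].
  have := linear_op_coef linF (F_mono HU sq0) Finj a.
  rewrite Fa !coef0 => /esym/eqP; rewrite mulf_eq0 (negPf aij) orbF mulf_eq0.
  rewrite expf_eq0 (negPf sq0) andbF /= mulf_eq0 (ecoef_eq0 d_ge2 prim_q).
  by rewrite invr_eq0 expf_eq0 (negPf sq0) andbF.
- have Kinj i' j' : sq ^- i' * sq ^+ j' != 0 -> i' = i -> j' = j -> i' = i /\ j' = j.
    by move=> _ -> ->.
  have := linear_op_coef linK (K_mono HU) Kinj a.
  rewrite Ka -[X in X = _]mul1r => /(mulIf aij)/(congr1 ( *%R (sq ^+ i))).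
  by rewrite mulr1 mulrA mulfV ?expf_neq0 // mul1r.
Qed.

Lemma mono_invariant k k' : (4 %| k%:Z - k'%:Z)%Z ->
  invariant_of_degree sq E F K L (k * d + k' * d) (mono C (k * d) (k' * d)).
Proof.
move=> k4; split.
- rewrite (E_mono HU sq0).
  have /eqP -> : ecoef sq (k * d) == 0 by rewrite (ecoef_eq0 d_ge2 prim_q) dvdn_mull.
  by rewrite mul0r smono0.
- rewrite (F_mono HU sq0).
  have /eqP -> : ecoef sq (k' * d) == 0 by rewrite (ecoef_eq0 d_ge2 prim_q) dvdn_mull.
  by rewrite !mulr0 smono0.
- rewrite -(expr_muld_eq prim_q) in k4.
  by rewrite (K_mono HU) (eqP k4) mulVf ?expf_neq0 // smono1.
- exact: (L_mono HU).
Qed.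

Lemma invariant_in_span r a : invariant_of_degree sq E F K L r a ->
  in_span (invariant_monomial (sq ^+ 2) d) a.
Proof.
move=> inv_a.
suff smono_in_span i j : in_span (invariant_monomial (sq ^+ 2) d) (smono a`_i`_j i j).
  rewrite (monomial_decomposition a).
  by apply: big_ind => [|u v|i _]; [exact: span0 | exact: spanD |];
    apply: big_ind => [|u v|j _]; [exact: span0 | exact: spanD |].
have [->|aij] := eqVneq a`_i`_j 0; first by rewrite smono0; apply: span0.
have [/dvdnP[k ->] /dvdnP[k' ->] eq_exp] := invariant_support inv_a aij.
apply/spanZ/span_mem; exists k, k'; split.
  by rewrite -(expr_muld_eq prim_q) eq_exp.
by rewrite qexp_x1 qexp_y1 -mono_xy.
Qed.

End Invariants.

Theorem proposition5p4 (C : numClosedFieldType) (d : nat) (q sq : C)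
  (E F K Kinv L : {poly {poly C}} -> {poly {poly C}}) :
  (2 <= d)%N ->
  (2 * d)%N.-primitive_root q ->
  q != 1 -> q != -1 -> q != 'i -> q != - 'i ->
  sq ^+ 2 = q ->
  is_Uq_action q sq E F K Kinv L ->
  forall v : {poly {poly C}},
    in_span (fun a => exists r : nat, invariant_of_degree sq E F K L r a) v
    <->
    in_span (fun m => exists k k' : nat,
               (4 %| (k%:Z - k'%:Z))%Z /\
               m = qmul q (qexp q (qx1 C) (k * d)) (qexp q (qy1 C) (k' * d))) v.
Proof.
(* q <> 1, -1, i, -i already follow from primitivity and d >= 2. *)
move=> d_ge2 prim_q _ _ _ _ Hq; subst q => HU v.
split; apply: span_sub => u.
  by case=> r; apply: (invariant_in_span d_ge2 prim_q HU).
case=> k [k' [k4 ->]]; apply: span_mem; exists (k * d + k' * d)%N.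
rewrite qexp_x1 qexp_y1 -mono_xy.
exact: (mono_invariant d_ge2 prim_q HU k4).
Qed.
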